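(* For the concurrent stepped-wedge design with $m$ interventions and $T\ge3$ periods (described in the context), suppose $2+b-bT\neq0$ and $3+b-2bT\ne 0$ and the relevant matrix is invertible. Then the matrix $\mathbf H$ satisfying $\mathrm E(\hat\theta)=\mathbf H\delta$ (when $\mathrm E(\bar{\mathbf y}_i)=\beta+\mathbf Z_i\delta$) is $$\mathbf H=\Big[\tfrac1c\big(\mathbf I_m+\tfrac dg\mathbf J_m\big)\Big]\otimes\mathbf r'-\tfrac1g\,\mathbf J_m\otimes\mathbf v',$$ where $\otimes$ is the Kronecker product and $\mathbf J_m$ the $m\times m$ all-ones matrix. Consequently, for each $k=1,\dots,m$, $$\mathrm E(\hat\theta_k)=\frac1c\mathbf r'\delta_k+\frac1g\Big(\frac dc\mathbf r'-\mathbf v'\Big)\delta_*,\qquad \delta_*=\sum_{k=1}^m\delta_k .$$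
   Context: Setting: a stepped-wedge trial with $T$ periods, $m$ interventions and a common cluster-period size $n$. The concurrent design has $I=m(T-1)$ clusters; cluster $i$ with $(k-1)(T-1)+1\le i\le k(T-1)$ receives only intervention $k$, and with $l=i-(k-1)(T-1)\in\{1,\dots,T-1\}$ it has $x_{kij}=1$ iff $j>l$ (and $x_{k'ij}=0$ for $k'\ne k$). Exposure time $e_{kij}=\sum_{j'\le j}x_{kij'}$. $\mathbf X_i$ is the $T\times m$ matrix with $(j,k)$ entry $x_{kij}$; $\mathbf Z_{k,i}$ is the $T\times(T-1)$ matrix with $(j,e)$ entry $1$ if $e_{kij}=e$ and $0$ otherwise; $\mathbf Z_i=(\mathbf Z_{1,i},\dots,\mathbf Z_{m,i})$. $\delta=(\delta_1',\dots,\delta_m')'$, $\delta_k=(\delta_{k,1},\dots,\delta_{k,T-1})'$. $\bar{\mathbf y}_i\in\mathbb R^T$ are cluster-period means with $\mathrm{Cov}(\bar{\mathbf y}_i)=\Sigma=\sigma_\alpha^2\mathbf 1\mathbf 1'+(\sigma_\epsilon^2/n)\mathbf I_T$. $\hat\theta=(\hat\theta_1,\dots,\hat\theta_m)'$ is the GLS estimator (known $\Sigma$) of $\theta$ in the working model $\bar{\mathbf y}_i=\beta+\mathbf X_i\theta+\mathbf 1\alpha_i+\bar\epsilon_i$ with unrestricted period effects $\beta\in\mathbb R^T$. Constants: $b=\sigma_\alpha^2/(T\sigma_\alpha^2+\sigma_\epsilon^2/n)$, $c=T(T-1)(3+b-2bT)/6$, $d=T[4T-2-3bT(T-1)]/(12m)$,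 $g=c-md=T(T-2)(2+b-bT)/12$. $\mathbf r,\mathbf v\in\mathbb R^{T-1}$ with $r_j=(T-j)[1+b(1-T-j)/2]$ and $v_j=(T-j)[1-bT+j/(T-1)]/(2m)$, $j=1,\dots,T-1$. *)

From mathcomp Require Import all_boot all_order all_algebra.
From mathcomp Require Export mxtens.
Set Implicit Arguments. Unset Strict Implicit. Unset Printing Implicit Defensive.
Import Order.TTheory GRing.Theory Num.Theory.
Local Open Scope ring_scope.

Section SW.
Variables (R : realFieldType) (T m : nat).

(* Periods are indexed by j : 'I_T (0-based: paper period j+1).
   Clusters i = 1..m(T-1) are indexed by pairs (k, l) : 'I_m * 'I_(T-1),
   paper cluster i = k(T-1) + l + 1, which receives only intervention k+1
   and has paper parameter l+1. *)

Definition xind (k : 'I_m) (l : 'I_(T.-1)) (k' : 'I_m) (j : 'I_T) : R :=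
  ((k' == k) && (l < j)%N)%:R.

Definition Xmat (k : 'I_m) (l : 'I_(T.-1)) : 'M[R]_(T, m) :=
  \matrix_(j, k') xind k l k' j.

Definition expo (k : 'I_m) (l : 'I_(T.-1)) (k' : 'I_m) (j : 'I_T) : nat :=
  \sum_(j' < T | (j' <= j)%N) ((k' == k) && (l < j')%N).

(* Z_i = (Z_{1,i}, ..., Z_{m,i}) : T x m(T-1); column (k', e) (0-based e,
   paper exposure e+1) sits at position k'(T-1) + e (Kronecker ordering). *)
Definition Zmat (k : 'I_m) (l : 'I_(T.-1)) : 'M[R]_(T, m * T.-1) :=
  \matrix_(j, p) (expo k l (mxtens_unindex p).1 j == (mxtens_unindex p).2.+1)%:R.

(* delta = (delta_1', ..., delta_m')' built from the m x (T-1) matrix D whose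
   k-th row is delta_k'. *)
Definition deltavec (D : 'M[R]_(m, T.-1)) : 'cV[R]_(m * T.-1) :=
  \col_p D (mxtens_unindex p).1 (mxtens_unindex p).2.

Definition Sigma (sa2 se2 : R) (n : nat) : 'M[R]_T :=
  sa2 *: const_mx 1 + (se2 / n%:R) *: 1%:M.

Definition Wmat (k : 'I_m) (l : 'I_(T.-1)) : 'M[R]_(T, T + m) :=
  row_mx 1%:M (Xmat k l).

Definition glsM (sa2 se2 : R) (n : nat) : 'M[R]_(T + m) :=
  \sum_(k < m) \sum_(l < T.-1)
     (Wmat k l)^T *m invmx (Sigma sa2 se2 n) *m Wmat k l.

Definition gls_est (sa2 se2 : R) (n : nat)
    (ys : 'I_m -> 'I_(T.-1) -> 'cV[R]_T) : 'cV[R]_(T + m) :=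
  invmx (glsM sa2 se2 n) *m
    \sum_(k < m) \sum_(l < T.-1)
       (Wmat k l)^T *m invmx (Sigma sa2 se2 n) *m ys k l.

Definition gls_theta (sa2 se2 : R) (n : nat)
    (ys : 'I_m -> 'I_(T.-1) -> 'cV[R]_T) : 'cV[R]_m :=
  dsubmx (gls_est sa2 se2 n ys).

Definition bconst (sa2 se2 : R) (n : nat) : R :=
  sa2 / (T%:R * sa2 + se2 / n%:R).
Definition cconst (b : R) : R :=
  T%:R * (T%:R - 1) * (3 + b - 2 * b * T%:R) / 6.
Definition dconst (b : R) : R :=
  T%:R * (4 * T%:R - 2 - 3 * b * T%:R * (T%:R - 1)) / (12 * m%:R).
Definition gconst (b : R) : R := cconst b - m%:R * dconst b.

(* r and v, with 0-based index j (paper index j+1). *)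
Definition rvec (b : R) : 'cV[R]_(T.-1) :=
  \col_j ((T%:R - j.+1%:R) * (1 + b * (1 - T%:R - j.+1%:R) / 2)).
Definition vvec (b : R) : 'cV[R]_(T.-1) :=
  \col_j ((T%:R - j.+1%:R) * (1 - b * T%:R + j.+1%:R / (T%:R - 1)) / (2 * m%:R)).

Definition Hmat (b : R) : 'M[R]_(m * 1, m * T.-1) :=
  ((cconst b)^-1 *: (1%:M + (dconst b / gconst b) *: const_mx 1)) *t (rvec b)^T
  - ((gconst b)^-1 *: const_mx 1) *t (vvec b)^T.

End SW.

From mathcomp Require Import all_boot all_order all_algebra.
From mathcomp Require Import mxtens ring zify.
Set Implicit Arguments. Unset Strict Implicit. Unset Printing Implicit Defensive.
Import Order.TTheory GRing.Theory Num.Theory.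
Local Open Scope ring_scope.

(* The GLS estimator is linear in the data, so E(theta_hat) is the theta-part of the
   solution of the normal equations in which every y_i is replaced by its mean
   beta + Z_i delta.  Instead of inverting the information matrix we exhibit this solution:
   theta = H delta, together with period effects beta + p, where p is chosen so that in
   every period the residuals of the clusters add up to zero.  As
   Sigma^-1 = s^-1 (I - b J), the normal equations reduce to these period balances and,
   for each arm k, to a scalar identity.  Evaluating the power sums over the staircase
   design, that identity reads  c theta_k - d (theta_1 + ... + theta_m) = r' delta_k - v' e,
   with e = delta_1 + ... + delta_m.  This intraclass system is solved by
   theta_k = c^-1 r' delta_k + g^-1 ((d/c) r' - v') e, g = c - m d, which is H delta. *)

Section NatSums.
Variable R : realFieldType.
Implicit Types (f : nat -> R) (n l j : nat).

Lemma sum_natr n : \sum_(0 <= j < n.+1) (j%:R : R) = n%:R * (n%:R + 1) / 2.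
Proof.
elim: n => [|n IH]; first by rewrite big_nat1 mul0r mul0r.
by rewrite big_nat_recr //= IH -(natr1 (R:=R) n); field.
Qed.

Lemma sum_natr_sqr n :
  \sum_(0 <= j < n.+1) (j%:R ^+ 2 : R) = n%:R * (n%:R + 1) * (2 * n%:R + 1) / 6.
Proof.
elim: n => [|n IH]; first by rewrite big_nat1 expr2 !mul0r.
by rewrite big_nat_recr //= IH -(natr1 (R:=R) n); field.
Qed.

Lemma sum_partial_sums f n :
  \sum_(0 <= j < n.+1) \sum_(0 <= x < j) f x = \sum_(0 <= x < n) f x * (n%:R - x%:R).
Proof.
elim: n => [|n IH]; first by rewrite big_nat1 !big_geq.
rewrite big_nat_recr //= IH -(natr1 (R:=R) n) [in RHS]big_nat_recr //=.
rewrite [in RHS](eq_bigr (fun x => f x * (n%:R - x%:R) + f x)); last by move=> x _; ring.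
by rewrite big_split big_nat_recr //=; ring.
Qed.

Lemma sum_natr_mul_partial_sums f n :
  \sum_(0 <= j < n.+1) j%:R * \sum_(0 <= x < j) f x
  = \sum_(0 <= x < n) f x * ((n%:R * (n%:R + 1) - x%:R * (x%:R + 1)) / 2).
Proof.
elim: n => [|n IH]; first by rewrite big_nat1 !big_geq ?mulr0.
rewrite big_nat_recr //= IH -(natr1 (R:=R) n) [in RHS]big_nat_recr //=.
rewrite [in RHS](eq_bigr (fun x => f x * ((n%:R * (n%:R + 1) - x%:R * (x%:R + 1)) / 2)
                                  + f x * (n%:R + 1))); last by move=> x _; field.
by rewrite big_split /= -mulr_suml big_nat_recr //=; field.
Qed.

Lemma sum_rev_nat F n :
  \sum_(0 <= l < n) F (n - l)%N = \sum_(0 <= j < n.+1) F j - F 0%N :> R.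
Proof.
elim: n => [|n IH]; first by rewrite big_geq // big_nat1 subrr.
rewrite big_nat_recl // subn0 [in RHS]big_nat_recr //=.
under eq_bigr do rewrite subSS.
by rewrite IH; ring.
Qed.

Lemma sum_indicator_gt_shift f n l :
  \sum_(0 <= j < n) ((l < j)%N)%:R * f (j - l.+1)%N = \sum_(0 <= x < n - l.+1) f x.
Proof.
elim: n => [|n IH]; first by rewrite !big_geq.
rewrite big_nat_recr //= IH.
case: (ltnP l n) => h.
  by rewrite (_ : n.+1 - l.+1 = (n - l.+1).+1)%N ?big_nat_recr ?mul1r //; lia.
by rewrite (_ : n.+1 - l.+1 = n - l.+1)%N ?mul0r ?addr0 //; lia.
Qed.

Lemma sum_indicator_gt n l : \sum_(0 <= j < n) ((l < j)%N)%:R = (n - l.+1)%:R :> R.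
Proof.
have := sum_indicator_gt_shift (fun=> 1) n l.
by rewrite sumr_const_nat subn0 => <-; apply: eq_bigr => j _; rewrite mulr1.
Qed.

Lemma sum_indicator_lt_shift f n j : (j <= n)%N ->
  \sum_(0 <= l < n) ((l < j)%N)%:R * f (j - l.+1)%N = \sum_(0 <= x < j) f x.
Proof.
move=> hj; rewrite (big_cat_nat (leq0n j) hj) /=.
rewrite [X in _ + X]big1_seq ?addr0; last first.
  by move=> i; rewrite mem_index_iota => /andP[_ /andP[/leq_gtF -> _]]; rewrite mul0r.
rewrite big_nat_rev /= add0n; apply: eq_big_nat => i /andP[_ hi].
have -> : (j - (j - i.+1).+1 = i)%N by lia.
by rewrite (_ : j - i.+1 < j)%N ?mul1r //; lia.
Qed.

Lemma sum_indicator_lt n j : (j <= n)%N ->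
  \sum_(0 <= l < n) ((l < j)%N)%:R = j%:R :> R.
Proof.
move=> hj; have := sum_indicator_lt_shift (fun=> 1) hj.
by rewrite sumr_const_nat subn0 => <-; apply: eq_bigr => l _; rewrite mulr1.
Qed.

End NatSums.

Lemma summx_col_mx (R : zmodType) (I : Type) (r : seq I) (P : pred I) p1 p2 q
    (A : I -> 'M[R]_(p1, q)) (B : I -> 'M[R]_(p2, q)) :
  \sum_(i <- r | P i) col_mx (A i) (B i)
  = col_mx (\sum_(i <- r | P i) A i) (\sum_(i <- r | P i) B i).
Proof.
elim/big_rec3: _ => [|i x y z _ ->]; first by rewrite col_mx0.
by rewrite add_col_mx.
Qed.

Section IntraclassMatrices.
Variables (R : fieldType) (n : nat).

Lemma const_mx1_mul :
  (const_mx 1 : 'M[R]_n) *m (const_mx 1 : 'M[R]_n) = n%:R *: const_mx 1.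
Proof.
apply/matrixP => i j; rewrite !mxE; under eq_bigr do rewrite !mxE mulr1.
by rewrite sumr_const card_ord mulr1.
Qed.

Lemma invmx_intraclass (a s : R) : s != 0 -> n%:R * a + s != 0 ->
  invmx (a *: const_mx 1 + s *: 1%:M : 'M[R]_n)
  = s^-1 *: (1%:M - (a / (n%:R * a + s)) *: const_mx 1).
Proof.
move=> s0 den0; set A := _ + _; set B := _ *: _.
have AB1 : A *m B = 1%:M.
  rewrite /A /B mulmxDl -!scalemxAl mul1mx -!scalemxAr mulmxBr mulmx1 -scalemxAr.
  rewrite const_mx1_mul; apply/matrixP => i j; rewrite !mxE.
  by field; rewrite s0 den0.
have [Aunit _] := mulmx1_unit AB1.
by rewrite -[invmx A]mulmx1 -AB1 mulmxA mulVmx // mul1mx.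
Qed.

Lemma intraclass_mulmxE (s b : R) (w : 'cV[R]_n) (j : 'I_n) :
  ((s^-1 *: (1%:M - b *: const_mx 1)) *m w) j 0
  = s^-1 * (w j 0 - b * \sum_(j' < n) w j' 0).
Proof.
rewrite mxE; under eq_bigr do rewrite !mxE.
have -> : \sum_(j' < n) s^-1 * ((j == j')%:R - b * 1) * w j' 0
    = s^-1 * \sum_(j' < n) (j == j')%:R * w j' 0 - s^-1 * (b * \sum_(j' < n) w j' 0).
  by rewrite !mulr_sumr -sumrB; apply: eq_bigr => j' _; ring.
rewrite (bigD1 j) //= eqxx mul1r big1 ?addr0; first by ring.
by move=> j' /negbTE jj'; rewrite eq_sym jj' mul0r.
Qed.

Lemma intraclass_solve (c d w : R) (a : 'I_n -> R) :
  c != 0 -> c - n%:R * d != 0 ->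
  let th k := c^-1 * a k + (c - n%:R * d)^-1 * (d / c * \sum_(k' < n) a k' - w) in
  forall k, c * th k = a k - w + d * \sum_(k' < n) th k'.
Proof.
move=> c0 g0 th k; rewrite /th big_split /= -mulr_sumr sumr_const card_ord -mulr_natl.
by move: (\sum_(k' < n) a k') => A; field; rewrite c0 g0.
Qed.

End IntraclassMatrices.

Lemma invmx_Sigma (R : realFieldType) (T n : nat) (sa2 se2 : R) :
  (0 < n)%N -> 0 <= sa2 -> 0 < se2 ->
  invmx (Sigma T sa2 se2 n)
  = (se2 / n%:R)^-1 *: (1%:M - bconst T sa2 se2 n *: const_mx 1).
Proof.
move=> hn hsa hse; have s_gt0 : 0 < se2 / n%:R by rewrite divr_gt0 // ltr0n.
rewrite invmx_intraclass ?gt_eqF // ltr_wpDl // mulr_ge0 // ler0n.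
Qed.

Lemma gls_theta_normal_eq (R : realFieldType) (T m n : nat) (sa2 se2 : R)
    (ys : 'I_m -> 'I_T.-1 -> 'cV[R]_T) (u : 'cV[R]_(T + m)) :
  glsM T m sa2 se2 n \in unitmx ->
  \sum_(k < m) \sum_(l < T.-1) (@Wmat R T m k l)^T *m invmx (Sigma T sa2 se2 n)
                                *m (@Wmat R T m k l *m u - ys k l) = 0 ->
  gls_theta sa2 se2 n ys = dsubmx u.
Proof.
move=> Munit normal; rewrite /gls_theta /gls_est.
suff -> : \sum_(k < m) \sum_(l < T.-1)
    (@Wmat R T m k l)^T *m invmx (Sigma T sa2 se2 n) *m ys k l = glsM T m sa2 se2 n *m u.
  by rewrite mulKmx.
apply/eqP; rewrite eq_sym -subr_eq0; apply/eqP.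
rewrite -[RHS]normal /glsM mulmx_suml -sumrB; apply: eq_bigr => k _.
rewrite mulmx_suml -sumrB.
by apply: eq_bigr => l _; rewrite mulmxBr mulmxA.
Qed.

Section DesignMatrices.
Variables (R : realFieldType) (N m : nat).

Lemma sum_mxtens_index (F : 'I_(m * N) -> R) :
  \sum_(p < m * N) F p = \sum_(k < m) \sum_(e < N) F (mxtens_index (k, e)).
Proof.
rewrite pair_big /= (reindex (@mxtens_index m N)) /=; last first.
  by exists (@mxtens_unindex m N) => ? _; rewrite (mxtens_indexK, mxtens_unindexK).
by apply: eq_bigr => -[].
Qed.

Lemma count_treated_periods n l j :
  (\sum_(j' < n | (j' <= j)%N) (l < j')%N = minn n j.+1 - l.+1)%N.
Proof.
elim: n => [|n IH]; first by rewrite big_ord0.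
rewrite big_mkcond big_ord_recr /= -big_mkcond IH.
by case: (leqP n j) => h /=; lia.
Qed.

Lemma expoE (k : 'I_m) (l : 'I_N) (k' : 'I_m) (j : 'I_N.+1) :
  @expo N.+1 m k l k' j = if k' == k then (j - l)%N else 0%N.
Proof.
rewrite /expo; case: eqP => _ /=; last by rewrite big1.
by rewrite count_treated_periods; have := ltn_ord j; lia.
Qed.

Lemma Xmat_mulE (th : 'cV[R]_m) (k : 'I_m) (l : 'I_N) (j : 'I_N.+1) :
  (@Xmat R N.+1 m k l *m th) j 0 = ((l < j)%N)%:R * th k 0.
Proof.
rewrite mxE (bigD1 k) //= big1 ?addr0; last first.
  by move=> k' /negbTE k'k; rewrite !mxE /xind k'k mul0r.
by rewrite !mxE /xind eqxx.
Qed.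

(* [dext D k x] is the effect of exposure time [x+1] to intervention [k], extended by
   [0] beyond the last exposure time so that it can be summed over ranges of [nat]. *)
Definition dext (D : 'M[R]_(m, N)) (k : 'I_m) (x : nat) : R :=
  \sum_(e < N) (e == x :> nat)%:R * D k e.

Lemma sum_dext_mul D k (F : nat -> R) :
  \sum_(0 <= x < N) dext D k x * F x = \sum_(e < N) D k e * F e.
Proof.
rewrite big_mkord /dext; under eq_bigr do rewrite mulr_suml.
rewrite exchange_big /=; apply: eq_bigr => e _.
rewrite (bigD1 e) //= eqxx mul1r big1 ?addr0 // => x xe.
by rewrite (_ : (e == x :> nat) = false) ?mul0r //; apply: contraNF xe => /eqP/val_inj ->.
Qed.

Lemma Zmat_deltavecE D (k : 'I_m) (l : 'I_N) (j : 'I_N.+1) :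
  (@Zmat R N.+1 m k l *m @deltavec R N.+1 m D) j 0
  = ((l < j)%N)%:R * dext D k (j - l.+1).
Proof.
rewrite mxE sum_mxtens_index (bigD1 k) //= [X in _ + X]big1 ?addr0; last first.
  move=> k' /negbTE k'k; apply: big1 => e _.
  by rewrite !mxE mxtens_indexK /= expoE k'k mul0r.
rewrite /dext mulr_sumr; apply: eq_bigr => e _.
rewrite !mxE mxtens_indexK /= expoE eqxx.
case: (ltnP l j) => lj.
  by rewrite (_ : ((j - l)%N == e.+1) = (e == (j - l.+1)%N :> nat)) ?mul1r //; apply/eqP/eqP; lia.
by rewrite (_ : ((j - l)%N == e.+1) = false) ?mul0r //; apply/eqP; lia.
Qed.

End DesignMatrices.

(* With T = N + 1 periods j = 0..N, cluster (k, l), l < N, receives intervention k from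
   period l + 1 on, so it is treated in period j iff l < j, with exposure time j - l;
   [dl k x] is the effect of exposure time x + 1 and [th] the candidate theta. *)
Section ScalarNormalEquations.
Variables (R : realFieldType) (N m : nat) (b : R).
Variables (dl : 'I_m -> nat -> R) (th : 'I_m -> R).
Hypotheses (hN : (0 < N)%N) (hm : (0 < m)%N).

Definition dsum x := \sum_(k < m) dl k x.
Definition thsum := \sum_(k < m) th k.

(* The candidate period effects (minus beta): they balance the residuals of every
   period over the clusters, see [sum_resid_period]. *)
Definition period_shift j :=
  (\sum_(0 <= x < j) dsum x - j%:R * thsum) / (m%:R * N%:R).

Definition resid k l j := period_shift j + ((l < j)%N)%:R * (th k - dl k (j - l.+1)).

Definition resid_total k l := \sum_(0 <= j < N.+1) resid k l j.

Let natm_neq0 : m%:R != 0 :> R. Proof. by rewrite pnatr_eq0 -lt0n. Qed.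
Let natN_neq0 : N%:R != 0 :> R. Proof. by rewrite pnatr_eq0 -lt0n. Qed.

Lemma sum_resid_period j : (j <= N)%N ->
  \sum_(k < m) \sum_(0 <= l < N) resid k l j = 0.
Proof.
move=> hj.
have resid_clusters k : \sum_(0 <= l < N) resid k l j
    = N%:R * period_shift j + j%:R * th k - \sum_(0 <= x < j) dl k x.
  rewrite big_split sumr_const_nat subn0 /=; under eq_bigr do rewrite mulrBr.
  rewrite sumrB -mulr_suml sum_indicator_lt // sum_indicator_lt_shift // -mulr_natl.
  by ring.
rewrite (eq_bigr _ (fun k _ => resid_clusters k)) sumrB big_split /= sumr_const card_ord.
have -> : \sum_(k < m) \sum_(0 <= x < j) dl k x = \sum_(0 <= x < j) dsum x.
  exact: exchange_big.
rewrite -mulr_sumr -/thsum -mulr_natr /period_shift.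
by field; rewrite natm_neq0 natN_neq0.
Qed.

Lemma sum_resid_total : \sum_(k < m) \sum_(0 <= l < N) resid_total k l = 0.
Proof.
under eq_bigr do rewrite exchange_big /=.
rewrite exchange_big /= big1_seq // => j /andP[_].
by rewrite mem_index_iota => /andP[_ hj]; exact: sum_resid_period.
Qed.

Definition period_shift_total := \sum_(0 <= j < N.+1) period_shift j.

Lemma resid_totalE k l : resid_total k l
  = period_shift_total + (N - l)%:R * th k - \sum_(0 <= x < N - l) dl k x.
Proof.
rewrite /resid_total /resid big_split /=.
under [X in _ + X]eq_bigr do rewrite mulrBr.
by rewrite sumrB -[\sum_(0 <= i < N.+1) _ * th k]mulr_suml sum_indicator_gt
  sum_indicator_gt_shift subSS addrA.
Qed.

Lemma sum_treated_resid k l :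
  \sum_(0 <= j < N.+1) ((l < j)%N)%:R * (resid k l j - b * resid_total k l)
  = \sum_(0 <= j < N.+1) ((l < j)%N)%:R * period_shift j
    + (1 - b * (N - l)%:R) * ((N - l)%:R * th k - \sum_(0 <= x < N - l) dl k x)
    - b * (N - l)%:R * period_shift_total.
Proof.
set rt := resid_total k l.
rewrite (eq_bigr (fun j => ((l < j)%N)%:R * period_shift j + ((l < j)%N)%:R * th k
    - ((l < j)%N)%:R * dl k (j - l.+1) - ((l < j)%N)%:R * (b * rt))); last first.
  by move=> j _; rewrite /resid; case: (l < j)%N => /=; ring.
rewrite !sumrB big_split /= -[\sum_(0 <= j < N.+1) _ * th k]mulr_suml.
rewrite -[\sum_(0 <= j < N.+1) _ * (b * rt)]mulr_suml sum_indicator_gt.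
by rewrite sum_indicator_gt_shift subSS /rt resid_totalE; ring.
Qed.

Lemma period_shift_totalE : period_shift_total
  = (\sum_(0 <= x < N) dsum x * (N%:R - x%:R) - thsum * (N%:R * (N%:R + 1) / 2))
    / (m%:R * N%:R).
Proof.
rewrite /period_shift_total /period_shift -mulr_suml sumrB sum_partial_sums.
by rewrite -[\sum_(0 <= j < N.+1) _ * thsum]mulr_suml sum_natr [_ * thsum]mulrC.
Qed.

Lemma sum_natr_mul_period_shift : \sum_(0 <= j < N.+1) j%:R * period_shift j
  = (\sum_(0 <= x < N) dsum x * ((N%:R * (N%:R + 1) - x%:R * (x%:R + 1)) / 2)
     - thsum * (N%:R * (N%:R + 1) * (2 * N%:R + 1) / 6)) / (m%:R * N%:R).
Proof.
rewrite (eq_bigr (fun j => (j%:R * \sum_(0 <= x < j) dsum x - j%:R ^+ 2 * thsum)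
                           / (m%:R * N%:R))); last by move=> j _; rewrite /period_shift; ring.
rewrite -mulr_suml sumrB sum_natr_mul_partial_sums.
by rewrite -[\sum_(0 <= j < N.+1) _ * thsum]mulr_suml sum_natr_sqr [_ * thsum]mulrC.
Qed.

(* The entries r_(x+1) and v_(x+1) of the paper, for T = N + 1. *)
Definition rweight x := (N%:R - x%:R) * (1 - b * (N%:R + x%:R + 1) / 2).
Definition vweight x :=
  (N%:R - x%:R) * (1 - b * (N%:R + 1) + (x%:R + 1) / N%:R) / (2 * m%:R).

Lemma sum_rweight (f : nat -> R) : \sum_(0 <= x < N) f x * rweight x
  = \sum_(0 <= x < N) f x * (N%:R - x%:R)
    - b * \sum_(0 <= x < N) f x * ((N%:R * (N%:R + 1) - x%:R * (x%:R + 1)) / 2).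
Proof.
by rewrite mulr_sumr -sumrB; apply: eq_bigr => x _; rewrite /rweight; field.
Qed.

Lemma sum_vweight (f : nat -> R) : \sum_(0 <= x < N) f x * vweight x
  = (\sum_(0 <= x < N) f x * ((N%:R * (N%:R + 1) - x%:R * (x%:R + 1)) / 2)
     - b * (N%:R * (N%:R + 1) / 2) * \sum_(0 <= x < N) f x * (N%:R - x%:R))
    / (m%:R * N%:R).
Proof.
rewrite mulr_sumr -sumrB mulr_suml; apply: eq_bigr => x _.
by rewrite /vweight; field; rewrite natm_neq0 natN_neq0.
Qed.

Lemma sum_treated_resid_all k :
  \sum_(0 <= l < N) \sum_(0 <= j < N.+1)
     ((l < j)%N)%:R * (resid k l j - b * resid_total k l)
  = cconst N.+1 b * th k - \sum_(0 <= x < N) dl k x * rweight x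
    + \sum_(0 <= x < N) dsum x * vweight x - dconst N.+1 m b * thsum.
Proof.
under eq_bigr do rewrite sum_treated_resid.
rewrite sumrB big_split /= exchange_big /=.
rewrite (eq_big_nat _ _ (F2 := fun j => j%:R * period_shift j)); last first.
  by move=> j /andP[_ hj]; rewrite -mulr_suml sum_indicator_lt.
rewrite (sum_rev_nat (fun t => (1 - b * t%:R) * (t%:R * th k - \sum_(0 <= x < t) dl k x))).
rewrite (sum_rev_nat (fun t => b * t%:R * period_shift_total)) (big_geq (leqnn 0)).
have -> : \sum_(0 <= j < N.+1)
            (1 - b * j%:R) * (j%:R * th k - \sum_(0 <= x < j) dl k x)
    = th k * \sum_(0 <= j < N.+1) j%:R - th k * b * \sum_(0 <= j < N.+1) j%:R ^+ 2
      - \sum_(0 <= j < N.+1) \sum_(0 <= x < j) dl k x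
      + b * \sum_(0 <= j < N.+1) j%:R * \sum_(0 <= x < j) dl k x.
  by rewrite !mulr_sumr -!sumrB -big_split /=; apply: eq_bigr => j _; ring.
have -> : \sum_(0 <= j < N.+1) b * j%:R * period_shift_total
    = b * period_shift_total * \sum_(0 <= j < N.+1) j%:R.
  by rewrite mulr_sumr; apply: eq_bigr => j _; ring.
rewrite sum_natr sum_natr_sqr sum_partial_sums sum_natr_mul_partial_sums.
rewrite sum_natr_mul_period_shift period_shift_totalE sum_rweight sum_vweight.
by rewrite /cconst /dconst -(natr1 (R:=R) N); field; rewrite natm_neq0 natN_neq0.
Qed.

Lemma sum_treated_resid_balance :
  (forall k, cconst N.+1 b * th k = \sum_(0 <= x < N) dl k x * rweight x
                                  - \sum_(0 <= x < N) dsum x * vweight x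
                                  + dconst N.+1 m b * thsum) ->
  forall k, \sum_(0 <= l < N) \sum_(0 <= j < N.+1)
              ((l < j)%N)%:R * (resid k l j - b * resid_total k l) = 0.
Proof. by move=> Hth k; rewrite sum_treated_resid_all Hth; ring. Qed.

End ScalarNormalEquations.

Section EffectMatrix.
Variables (R : realFieldType) (N m : nat) (b : R) (D : 'M[R]_(m, N)).

Lemma Hmat_deltavecE (k : 'I_m) :
  castmx (muln1 m, erefl 1%N) (Hmat N.+1 m b *m @deltavec R N.+1 m D) k 0
  = (cconst N.+1 b)^-1 * \sum_(e < N) rvec N.+1 b e 0 * D k e
    + (gconst N.+1 m b)^-1 * \sum_(e < N)
        (dconst N.+1 m b / cconst N.+1 b * rvec N.+1 b e 0 - vvec N.+1 m b e 0)
        * \sum_(k' < m) D k' e.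
Proof.
rewrite castmxE (_ : cast_ord _ k = mxtens_index (k, ord0)); last first.
  by apply: val_inj; rewrite /= muln1 addn0.
rewrite mxE sum_mxtens_index.
set c := cconst N.+1 b; set g := gconst N.+1 m b; set d := dconst N.+1 m b.
rewrite (eq_bigr (fun i => \sum_(e < N) (c^-1 * ((k == i)%:R * (rvec N.+1 b e 0 * D i e))
    + g^-1 * ((d / c * rvec N.+1 b e 0 - vvec N.+1 m b e 0) * D i e)))); last first.
  move=> i _; apply: eq_bigr => e _.
  by rewrite /Hmat mxE !tensmxE !mxE !mxtens_indexK /= -/c -/g -/d; ring.
under eq_bigr do rewrite big_split /=.
rewrite big_split /= (bigD1 k) //= [X in _ + X + _]big1 ?addr0; last first.
  by move=> i /negbTE ik; apply: big1 => e _; rewrite eq_sym ik mul0r mulr0.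
rewrite eqxx -mulr_sumr; under [in X in X + _]eq_bigr do rewrite mul1r.
congr (_ + _); rewrite exchange_big /= mulr_sumr; apply: eq_bigr => e _.
by rewrite -!mulr_sumr.
Qed.

Lemma rvecE (e : 'I_N) : rvec N.+1 b e 0 = rweight N b e.
Proof. by rewrite mxE /rweight -(natr1 (R:=R) N) -(natr1 (R:=R) e); ring. Qed.

Lemma vvecE (e : 'I_N) : vvec N.+1 m b e 0 = vweight N m b e.
Proof.
by rewrite mxE /vweight -(natr1 (R:=R) N) -(natr1 (R:=R) e) !addrK; ring.
Qed.

Lemma Hmat_deltavec_entry (k : 'I_m) :
  castmx (muln1 m, erefl 1%N) (Hmat N.+1 m b *m @deltavec R N.+1 m D) k 0
  = (cconst N.+1 b)^-1 * ((rvec N.+1 b)^T *m (row k D)^T) 0 0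
    + (gconst N.+1 m b)^-1
      * ((dconst N.+1 m b / cconst N.+1 b *: (rvec N.+1 b)^T - (vvec N.+1 m b)^T)
         *m (\sum_(k' < m) row k' D)^T) 0 0.
Proof.
rewrite Hmat_deltavecE !mxE; congr (_ * _ + _ * _); apply: eq_bigr => e _.
  by rewrite !mxE.
rewrite !mxE summxE; congr (_ * _); apply: eq_bigr => i _; by rewrite mxE.
Qed.

Lemma Hmat_deltavec_solves :
  cconst N.+1 b != 0 -> gconst N.+1 m b != 0 ->
  let th k := castmx (muln1 m, erefl 1%N) (Hmat N.+1 m b *m @deltavec R N.+1 m D) k 0 in
  forall k, cconst N.+1 b * th k
    = \sum_(0 <= x < N) dext D k x * rweight N b x
      - \sum_(0 <= x < N) dsum (dext D) x * vweight N m b x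
      + dconst N.+1 m b * thsum th.
Proof.
move=> c0 g0 th k.
set a := fun k' => \sum_(e < N) rvec N.+1 b e 0 * D k' e.
set w := \sum_(e < N) vvec N.+1 m b e 0 * \sum_(k' < m) D k' e.
have aE k' : \sum_(0 <= x < N) dext D k' x * rweight N b x = a k'.
  by rewrite sum_dext_mul; apply: eq_bigr => e _; rewrite rvecE mulrC.
have wE : \sum_(0 <= x < N) dsum (dext D) x * vweight N m b x = w.
  rewrite /dsum; under eq_bigr do rewrite mulr_suml.
  rewrite exchange_big /=; under eq_bigr do rewrite sum_dext_mul.
  rewrite exchange_big; apply: eq_bigr => e _ /=.
  by rewrite mulr_sumr vvecE; apply: eq_bigr => k' _; rewrite mulrC.
have thE k' : th k' = (cconst N.+1 b)^-1 * a k'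
    + (cconst N.+1 b - m%:R * dconst N.+1 m b)^-1
      * (dconst N.+1 m b / cconst N.+1 b * \sum_(i < m) a i - w).
  rewrite /th Hmat_deltavecE -/(a k'); congr (_ + _ * _).
  rewrite /a exchange_big /= mulr_sumr /w -sumrB; apply: eq_bigr => e _.
  by rewrite -mulr_sumr; ring.
rewrite aE wE /thsum (eq_bigr _ (fun k' _ => thE k')) thE.
exact: intraclass_solve.
Qed.

End EffectMatrix.

Section DesignNormalEquations.
Variables (R : realFieldType) (N m : nat) (b s : R) (D : 'M[R]_(m, N)) (th : 'cV[R]_m).
Hypotheses (hN : (0 < N)%N) (hm : (0 < m)%N).

Definition period_effect : 'cV[R]_N.+1 :=
  \col_j period_shift N (dext D) (fun k => th k 0) j.

Definition design_resid (k : 'I_m) (l : 'I_N) : 'cV[R]_N.+1 :=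
  period_effect + @Xmat R N.+1 m k l *m th - @Zmat R N.+1 m k l *m @deltavec R N.+1 m D.

Lemma design_residE k l j :
  design_resid k l j 0 = resid N (dext D) (fun k => th k 0) k l j.
Proof.
have -> : design_resid k l j 0 = period_effect j 0 + (@Xmat R N.+1 m k l *m th) j 0
    - (@Zmat R N.+1 m k l *m @deltavec R N.+1 m D) j 0 by rewrite !mxE.
by rewrite Xmat_mulE Zmat_deltavecE mxE /resid mulrBr addrA.
Qed.

Lemma normal_eq_periods :
  \sum_(k < m) \sum_(l < N) (s^-1 *: (1%:M - b *: const_mx 1)) *m design_resid k l = 0.
Proof.
set dl := dext D; set thf := fun k => th k 0.
apply/matrixP => j z; rewrite (ord1 z) summxE mxE.
have arm k : (\sum_(l < N) (s^-1 *: (1%:M - b *: const_mx 1)) *m design_resid k l) j 0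
    = s^-1 * (\sum_(0 <= l < N) resid N dl thf k l j
              - b * \sum_(0 <= l < N) resid_total N dl thf k l).
  rewrite summxE !big_mkord mulrBr !mulr_sumr -sumrB; apply: eq_bigr => l _.
  rewrite intraclass_mulmxE design_residE /resid_total big_mkord.
  by under eq_bigr do rewrite design_residE; rewrite mulrBr mulrA.
rewrite (eq_bigr _ (fun k _ => arm k)) -mulr_sumr sumrB -mulr_sumr.
have jN : (j <= N)%N by rewrite -ltnS.
by rewrite sum_resid_period // sum_resid_total // mulr0 subrr mulr0.
Qed.

Lemma normal_eq_treatments :
  (forall k, cconst N.+1 b * th k 0
     = \sum_(0 <= x < N) dext D k x * rweight N b x
       - \sum_(0 <= x < N) dsum (dext D) x * vweight N m b x
       + dconst N.+1 m b * thsum (fun k => th k 0)) ->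
  \sum_(k < m) \sum_(l < N)
    (@Xmat R N.+1 m k l)^T *m ((s^-1 *: (1%:M - b *: const_mx 1)) *m design_resid k l)
  = 0.
Proof.
move=> Hth; apply/matrixP => k' z; rewrite (ord1 z) summxE mxE.
rewrite (bigD1 k') //= [X in _ + X]big1 ?addr0; last first.
  move=> k k'k; rewrite summxE; apply: big1 => l _; rewrite mxE; apply: big1 => j _.
  by rewrite !mxE /xind eq_sym (negbTE k'k) mul0r.
rewrite -(mulr0 s^-1) -(sum_treated_resid_balance hN hm Hth k') mulr_sumr summxE big_mkord.
apply: eq_bigr => l _; rewrite mxE mulr_sumr big_mkord; apply: eq_bigr => j _.
rewrite [X in X * _]mxE [X in X * _]mxE /xind eqxx /= intraclass_mulmxE design_residE.
rewrite /resid_total big_mkord; under [in RHS]eq_bigr do rewrite -design_residE.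
by rewrite mulrCA.
Qed.

End DesignNormalEquations.

Lemma cluster_scoreE (R : realFieldType) (N m n : nat) (sa2 se2 : R)
    (beta : 'cV[R]_N.+1) (D : 'M[R]_(m, N)) (th : 'cV[R]_m) (k : 'I_m) (l : 'I_N) :
  (0 < n)%N -> 0 <= sa2 -> 0 < se2 ->
  let s := se2 / n%:R in let b := bconst N.+1 sa2 se2 n in
  let Y := s^-1 *: (1%:M - b *: const_mx 1) in
  (@Wmat R N.+1 m k l)^T *m invmx (Sigma N.+1 sa2 se2 n)
    *m (@Wmat R N.+1 m k l *m col_mx (beta + period_effect D th) th
        - (beta + @Zmat R N.+1 m k l *m @deltavec R N.+1 m D))
  = col_mx (Y *m design_resid D th k l)
           ((@Xmat R N.+1 m k l)^T *m (Y *m design_resid D th k l)).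
Proof.
move=> hn hsa hse s b Y.
rewrite invmx_Sigma // -/s -/b -/Y -mulmxA /Wmat tr_row_mx trmx1 mul_col_mx mul1mx.
rewrite mul_row_col mul1mx (_ : _ - _ = design_resid D th k l) //.
by apply/matrixP => i j; rewrite !mxE; ring.
Qed.

Lemma gls_theta_stepped_wedge (R : realFieldType) (N m n : nat) (sa2 se2 : R)
    (beta : 'cV[R]_N.+1) (D : 'M[R]_(m, N)) :
  (0 < N)%N -> (0 < m)%N -> (0 < n)%N -> 0 <= sa2 -> 0 < se2 ->
  cconst N.+1 (bconst N.+1 sa2 se2 n) != 0 -> gconst N.+1 m (bconst N.+1 sa2 se2 n) != 0 ->
  glsM N.+1 m sa2 se2 n \in unitmx ->
  @gls_theta R N.+1 m sa2 se2 n (fun (k : 'I_m) (l : 'I_N) =>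
                          beta + @Zmat R N.+1 m k l *m @deltavec R N.+1 m D)
  = castmx (muln1 m, erefl 1%N)
      (Hmat N.+1 m (bconst N.+1 sa2 se2 n) *m @deltavec R N.+1 m D).
Proof.
move=> hN hm hn hsa hse hc hg hM.
set th := castmx _ _.
rewrite -[RHS](col_mxKd (beta + period_effect D th)); apply: gls_theta_normal_eq => //.
under eq_bigr do under eq_bigr do rewrite cluster_scoreE //.
under eq_bigr do rewrite summx_col_mx.
rewrite summx_col_mx normal_eq_periods // normal_eq_treatments ?col_mx0 //.
exact: Hmat_deltavec_solves.
Qed.

Lemma cconst_neq0 (R : realFieldType) (T : nat) (b : R) :
  (1 < T)%N -> 3 + b - 2 * b * T%:R != 0 -> cconst T b != 0.
Proof.
move=> T1 hb; rewrite /cconst -(natrB _ (ltnW T1)) !mulf_neq0 ?invr_eq0 ?pnatr_eq0 //; lia.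
Qed.

Lemma gconstE (R : realFieldType) (T m : nat) (b : R) : (0 < m)%N ->
  gconst T m b = T%:R * (T%:R - 2) * (2 + b - b * T%:R) / 12.
Proof.
by move=> m0; rewrite /gconst /cconst /dconst; field; rewrite pnatr_eq0 -lt0n.
Qed.

Lemma gconst_neq0 (R : realFieldType) (T m : nat) (b : R) :
  (2 < T)%N -> (0 < m)%N -> 2 + b - b * T%:R != 0 -> gconst T m b != 0.
Proof.
move=> T2 m0 hb; rewrite gconstE // -(natrB _ (ltnW T2)).
by rewrite !mulf_neq0 ?invr_eq0 ?pnatr_eq0 //; lia.
Qed.

Theorem proposition1 (R : realFieldType) (T m n : nat) (sa2 se2 : R)
  (hT : (3 <= T)%N) (hm : (0 < m)%N) (hn : (0 < n)%N)
  (hsa : 0 <= sa2) (hse : 0 < se2)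
  (hb1 : 2 + bconst T sa2 se2 n - bconst T sa2 se2 n * T%:R != 0)
  (hb2 : 3 + bconst T sa2 se2 n - 2 * bconst T sa2 se2 n * T%:R != 0)
  (hM : glsM T m sa2 se2 n \in unitmx) :
  let b := bconst T sa2 se2 n in
  let c := cconst T b in
  let d := dconst T m b in
  let g := gconst T m b in
  let r := rvec T b in
  let v := vvec T m b in
  forall (beta : 'cV[R]_T) (D : 'M[R]_(m, T.-1)),
    let Ey := fun (k : 'I_m) (l : 'I_(T.-1)) =>
                beta + Zmat R k l *m deltavec D in
    let Etheta := gls_theta sa2 se2 n Ey in
    Etheta = castmx (muln1 m, erefl (1%N : nat)) (Hmat T m b *m deltavec D)
    /\ forall k : 'I_m,
         Etheta k 0 =
           c^-1 * (r^T *m (row k D)^T) 0 0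
           + g^-1 * ((d / c *: r^T - v^T) *m (\sum_(k' < m) row k' D)^T) 0 0.
Proof.
case: T hT hb1 hb2 hM => [//|N] hT hb1 hb2 hM b c d g r v beta D Ey Etheta.
have EthetaE : Etheta = castmx (muln1 m, erefl 1%N) (Hmat N.+1 m b *m deltavec D).
  apply: gls_theta_stepped_wedge => //; first by case: (N) hT.
    exact: cconst_neq0 (ltnW hT) hb2.
  exact: gconst_neq0 hT hm hb1.
by split=> // k; rewrite EthetaE Hmat_deltavec_entry.
Qed.
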